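(* Let $p$ be an odd prime, $k\in\{-1,1\}$, $n\ge1$, and let $L_n^k(f,p)$ be a Legendre graph of order $n$. Put $q=\lfloor n/p\rfloor$, $r=n-qp$, $\psi=\max\{0,\,2r-p+1\}$, $\delta_s=1$ if $s$ is even and $\delta_s=0$ if $s$ is odd, and $$\mathcal S_1=\sum_{\substack{s=2\\ s\ne p}}^{r+1}(s-1-\delta_s)(s/p),\qquad \mathcal S_2=\sum_{\substack{s=r+2\\ s\ne p}}^{2r}(2r-s+1-\delta_s)(s/p)$$ (empty sums are $0$). Then the number of edges of $L_n^k(f,p)$ equals $$\frac14\left[n^2-n-2nq+pq^2+q-\psi+k(\mathcal S_1+\mathcal S_2)\right].$$ In particular this number does not depend on the bijection $f$.
   Context: For an odd prime $p$ and an integer $a$ not divisible by $p$, $(a/p)$ denotes the Legendre symbol: $1$ if $a$ is a quadratic residue mod $p$, $-1$ otherwise. For $k\in\{-1,1\}$, a Legendre graph $L_n^k(f,p)$ of order $n$ is a simple graph on an $n$-element vertex set $V$ together with a bijection $f:V\to\{1,2,\dots,n\}$, whose edges are exactly the pairs $\{a,b\}$ of distinct vertices with $p\nmid f(a)+f(b)$ and $((f(a)+f(b))/p)=k$. *)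

From mathcomp Require Import all_boot all_order all_algebra.
Set Implicit Arguments. Unset Strict Implicit. Unset Printing Implicit Defensive.
Import Order.TTheory GRing.Theory Num.Theory.
Local Open Scope ring_scope.

Definition legendre (a p : nat) : int :=
  if (p %| a)%N then 0
  else if [exists x : 'I_p, (x * x == a %[mod p])%N] then 1 else -1.

Definition legendre_adj (V : finType) (f : V -> nat) (p : nat) (k : int)
  (a b : V) : bool :=
  [&& a != b, ~~ (p %| f a + f b)%N & legendre (f a + f b) p == k].

Definition legendre_edges (V : finType) (f : V -> nat) (p : nat) (k : int)
  : {set {set V}} :=
  [set e : {set V} | [exists a : V, exists b : V,
     legendre_adj f p k a b && (e == [set a; b])]].

Definition delta (s : nat) : int := (~~ odd s)%:R.

From mathcomp Require Import all_boot all_order all_algebra zify ring lra.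
Set Implicit Arguments. Unset Strict Implicit. Unset Printing Implicit Defensive.
Import Order.TTheory GRing.Theory Num.Theory.
Local Open Scope ring_scope.

(* Relabel the vertices by f, so that the edges are the pairs 1 <= i < j <= n
   with p not dividing i + j and ((i + j)/p) = k.  For such a sum s the edge
   indicator is (1 + k (s/p)) / 2, hence 4 |E| = 2 N + 2 k L, where N counts
   the pairs with p not dividing i + j and L sums ((i + j)/p) over all pairs.
   Adding the vertex n + 1 adds the sums n + 2, ..., 2n + 1, which gives the
   closed form of 2 N by induction on n.  L is periodic in n with period p:
   the Legendre symbol sums to 0 over a period (a class a has 1 + (a/p) square
   roots mod p), and so do the increments of L, because j |-> 2j + 2 and
   j |-> j + 2 permute Z/p.  Finally, for n = r < p, grouping the pairs by
   their sum s shows that 2 L = S1 + S2. *)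

Definition periodic (R : Type) (p : nat) (F : nat -> R) := forall s, F (s + p)%N = F s.

Section Periodic.
Variables (R : zmodType) (p : nat) (F : nat -> R).
Hypothesis F_per : periodic p F.

Lemma periodic_mod s : F s = F (s %% p).
Proof.
rewrite {1}(divn_eq s p) addnC; elim: (s %/ p)%N => [|m IH]; first by rewrite addn0.
by rewrite mulSn addnCA addnC F_per.
Qed.

Lemma sum_periodic_window x : \sum_(x <= s < x + p) F s = \sum_(0 <= s < p) F s.
Proof.
elim: x => [|x <-]; first by rewrite add0n.
apply: (addrI (F x)); rewrite -big_ltn addSn ?ltnS ?leq_addr //.
by rewrite big_nat_recr ?leq_addr //= F_per addrC.
Qed.

Lemma sum_periodic_affine a b : coprime a p ->
  \sum_(0 <= j < p) F (a * j + b) = \sum_(0 <= j < p) F j.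
Proof.
move=> co_ap; case: (posnP p) => [-> | p_gt0]; first by rewrite !big_geq.
pose g (j : 'I_p) : 'I_p := Ordinal (ltn_pmod (a * j + b) p_gt0).
have g_inj : injective g.
  move=> i j /(congr1 val) /= /eqP; rewrite eqn_modDr => eq_ij; apply/val_inj => /=.
  wlog le_ji : i j eq_ij / (j <= i)%N.
    by move=> W; case: (leqP j i) => [|/ltnW] /W ->; rewrite // eq_sym.
  move: eq_ij; rewrite eqn_mod_dvd ?leq_mul2l ?le_ji ?orbT // -mulnBr.
  rewrite Gauss_dvdr 1?coprime_sym // => /dvdn_leq; have := ltn_ord i; lia.
rewrite !big_mkord [RHS](reindex_inj g_inj).
by apply: eq_bigr => j _; rewrite periodic_mod.
Qed.

Lemma periodic_prefix_sum : \sum_(0 <= s < p) F s = 0 ->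
  periodic p (fun x => \sum_(0 <= s < x) F s).
Proof.
move=> F_sum0 x; rewrite (@big_cat_nat _ _ _ x) ?leq_addr //=.
by rewrite sum_periodic_window F_sum0 addr0.
Qed.

End Periodic.

(* [pair_sum F n] sums F (i + j) over the pairs 1 <= i < j <= n, grouped by
   j: the window of j collects the sums i + j.+1 with 1 <= i <= j. *)
Definition window_sum (R : zmodType) (F : nat -> R) (j : nat) : R :=
  \sum_(j.+2 <= s < (2 * j).+2) F s.

Definition pair_sum (R : zmodType) (F : nat -> R) (n : nat) : R :=
  \sum_(0 <= j < n) window_sum F j.

Lemma eq_pair_sum (R : zmodType) (F G : nat -> R) n :
  F =1 G -> pair_sum F n = pair_sum G n.
Proof. by move=> eq_FG; apply: eq_bigr => j _; apply: eq_bigr => s _. Qed.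

Lemma pair_sumD (R : zmodType) (F G : nat -> R) n :
  pair_sum (fun s => F s + G s) n = pair_sum F n + pair_sum G n.
Proof.
by rewrite /pair_sum /window_sum -big_split; apply: eq_bigr => j _; rewrite big_split.
Qed.

Lemma pair_sumMl (R : pzRingType) (c : R) (F : nat -> R) n :
  pair_sum (fun s => c * F s) n = c * pair_sum F n.
Proof.
by rewrite /pair_sum /window_sum mulr_sumr; apply: eq_bigr => j _; rewrite mulr_sumr.
Qed.

Lemma pair_sum_iota (R : zmodType) (F : nat -> R) n :
  \sum_(1 <= x < n.+1) \sum_(1 <= y < n.+1) (if (x < y)%N then F (x + y)%N else 0)
  = pair_sum F n.
Proof.
rewrite exchange_big_nat /pair_sum big_add1 /=.
apply: eq_big_nat => j /andP[_ j_lt]; rewrite /window_sum -[j.+2]/(1 + j.+1)%N big_addn.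
rewrite (_ : (2 * j).+2 - j.+1 = j.+1)%N; last by lia.
rewrite [RHS](big_nat_widen _ _ n.+1) 1?[RHS]big_mkcond //; exact: ltnW.
Qed.

Section PeriodicPairSums.
Variables (R : zmodType) (p : nat) (F : nat -> R).
Hypotheses (p_odd : odd p) (F_per : periodic p F) (F_sum0 : \sum_(0 <= s < p) F s = 0).

Let prefix x := \sum_(0 <= s < x) F s.

Let prefix_per : periodic p prefix.
Proof. exact: periodic_prefix_sum. Qed.

Let window_sum_prefix j : window_sum F j = prefix (2 * j).+2 - prefix j.+2.
Proof.
rewrite /prefix (@big_cat_nat _ _ _ j.+2 0 (2 * j).+2) //=; last by lia.
by rewrite addrC addrK.
Qed.

Lemma window_sum_periodic : periodic p (window_sum F).
Proof.
move=> j; rewrite !window_sum_prefix.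
have -> : (2 * (j + p)).+2 = (2 * j).+2 + p + p by lia.
have -> : (j + p).+2 = j.+2 + p by lia.
by rewrite !prefix_per.
Qed.

Lemma sum_window_sum_period : \sum_(0 <= j < p) window_sum F j = 0.
Proof.
(* j |-> 2j + 2 and j |-> j + 2 both permute the residues mod p *)
have shift j : window_sum F j = prefix (2 * j + 2) - prefix (1 * j + 2).
  by rewrite window_sum_prefix mul1n !addn2.
under eq_bigr do rewrite shift.
by rewrite sumrB !(sum_periodic_affine prefix_per) ?subrr ?coprime1n ?coprime2n.
Qed.

Lemma pair_sum_mod n : pair_sum F n = pair_sum F (n %% p).
Proof.
apply: periodic_mod; apply: periodic_prefix_sum.
  exact: window_sum_periodic.
exact: sum_window_sum_period.
Qed.

End PeriodicPairSums.

Lemma delta_double m : delta (2 * m) = 1.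
Proof. by rewrite /delta mul2n odd_double. Qed.

Lemma delta_doubleS m : delta (2 * m).+1 = 0.
Proof. by rewrite /delta mul2n /= odd_double. Qed.

Section WeightedSums.
Variable F : nat -> int.

(* The sums S1 and S2 of the statement for a general F (without the harmless
   restriction s != p): s - 1 - delta s and tail_weight r s are twice the
   number of ways to write s = i + j with 1 <= i < j <= r. *)
Definition head_sum (r : nat) : int :=
  \sum_(2 <= s < r.+2) (s%:Z - 1 - delta s) * F s.

Definition tail_weight (r s : nat) : int := 2 * r%:Z - s%:Z + 1 - delta s.

Definition tail_sum (r : nat) : int :=
  \sum_(r.+2 <= s < (2 * r).+1) tail_weight r s * F s.

Lemma head_sumS m : head_sum m.+1 = head_sum m + (m.+1%:Z - delta m.+2) * F m.+2.
Proof. by rewrite /head_sum big_nat_recr //; congr (_ + _ * _); lia. Qed.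

Lemma tail_sum_widen m :
  tail_sum m = \sum_(m.+2 <= s < (2 * m).+2) tail_weight m s * F s.
Proof.
case: m => [|m]; first by rewrite /tail_sum !big_geq.
rewrite /tail_sum [RHS]big_nat_recr /=; last by lia.
suff -> : tail_weight m.+1 (2 * m.+1).+1 = 0 by rewrite mul0r addr0.
by rewrite /tail_weight delta_doubleS; lia.
Qed.

Lemma tail_sumS m : tail_sum m.+1 =
  tail_sum m + 2 * window_sum F m - (m.+1%:Z - delta m.+2) * F m.+2.
Proof.
have -> : tail_sum m.+1 = \sum_(m.+2 <= s < (2 * m).+3) tail_weight m.+1 s * F s
                          - tail_weight m.+1 m.+2 * F m.+2.
  rewrite /tail_sum [in RHS]big_ltn; last by lia.
  have -> : (2 * m.+1).+1 = (2 * m).+3 by lia.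
  by rewrite addrC addKr.
rewrite big_nat_recr /=; last by lia.
have -> : tail_weight m.+1 (2 * m).+2 = 0.
  have -> : (2 * m).+2 = 2 * m.+1 by lia.
  by rewrite /tail_weight delta_double; lia.
rewrite mul0r addr0 tail_sum_widen /window_sum mulr_sumr -big_split /=.
congr (_ - _); last by rewrite /tail_weight; congr (_ * _); lia.
by apply: eq_bigr => s _; rewrite /tail_weight; lia.
Qed.

Lemma head_sum_tail_sum r : head_sum r + tail_sum r = 2 * pair_sum F r.
Proof.
elim: r => [|m IH]; first by rewrite /head_sum /tail_sum /pair_sum !big_geq.
rewrite head_sumS tail_sumS /pair_sum big_nat_recr //= mulrDr -IH; lra.
Qed.

End WeightedSums.

Lemma legendre_mod a p : legendre (a %% p) p = legendre a p.
Proof. by rewrite /legendre /dvdn modn_mod. Qed.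

Lemma legendre_dvd a p : (p %| a)%N -> legendre a p = 0.
Proof. by rewrite /legendre => ->. Qed.

Lemma legendre_periodic p : periodic p (legendre^~ p).
Proof. by move=> s; rewrite -legendre_mod modnDr legendre_mod. Qed.

Lemma sum_legendre_skip_p p m n (w : nat -> int) :
  \sum_(m <= s < n | s != p) w s * legendre s p = \sum_(m <= s < n) w s * legendre s p.
Proof.
rewrite big_mkcond; apply: eq_bigr => s _.
by case: eqP => // ->; rewrite legendre_dvd ?mulr0.
Qed.

Lemma sqr_subn_mod p x : (x <= p)%N -> ((p - x) * (p - x) = x * x %[mod p])%N.
Proof.
move=> le_xp; apply/eqP; rewrite -(eqn_modDr (x * (p - x))) -mulnDl subnK //.
by rewrite -mulnDr subnKC // modnMl modnMr.
Qed.

Section QuadraticResidues.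
Variable p : nat.
Hypotheses (p_pr : prime p) (p_odd : odd p).

Lemma sqr_eq_mod x y :
  (x * x = y * y %[mod p])%N -> (x = y %[mod p])%N \/ (p %| x + y)%N.
Proof.
wlog le_yx : x y / (y <= x)%N.
  move=> W; case: (leqP y x) => [/W //|/ltnW/W W' /esym/W'].
  by rewrite addnC => -[->|]; [left | right].
move/eqP; rewrite eqn_mod_dvd ?leq_mul // !mulnn subn_sqr.
rewrite Euclid_dvdM // => /orP[d_sub | d_add]; [left | by right].
by apply/eqP; rewrite eqn_mod_dvd.
Qed.

Lemma card_sqrt_mod a :
  #|[set x : 'I_p | (x * x == a %[mod p])%N]|%:Z = 1 + legendre a p.
Proof.
have p_gt0 := prime_gt0 p_pr.
rewrite /legendre; case: ifP => [a_dvd | a_ndvd].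
  pose x0 : 'I_p := Ordinal p_gt0.
  rewrite (_ : [set x | _] = [set x0]) ?cards1 //; apply/setP => x; rewrite !inE.
  move: a_dvd; rewrite /dvdn => /eqP ->; rewrite -/(dvdn _ _) Euclid_dvdM // orbb.
  apply/idP/eqP => [/dvdn_leq x_le | ->]; last by rewrite dvdn0.
  by apply/val_inj => /=; case: (posnP x) => // /x_le; rewrite leqNgt ltn_ord.
case: ifP => [/existsP[x0 /eqP sq_x0] | no_root]; last first.
  rewrite (_ : [set x | _] = set0) ?cards0 //; apply/setP => x; rewrite !inE.
  by apply: contraFF no_root => sq_x; apply/existsP; exists x.
have x0_gt0 : (0 < x0)%N.
  case: (posnP x0) => // x0_0; move: a_ndvd; rewrite /dvdn -sq_x0 x0_0.
  by rewrite mod0n.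
have x1_lt : (p - x0 < p)%N by lia.
pose x1 : 'I_p := Ordinal x1_lt.
have sq_x1 : (x1 * x1 = x0 * x0 %[mod p])%N := sqr_subn_mod (ltnW (ltn_ord x0)).
rewrite (_ : [set x | _] = [set x0; x1]).
  rewrite cards2; suff -> : x0 != x1 by [].
  apply/eqP => /(congr1 val) /= x0_eq; move: p_odd; rewrite -(subnK (ltnW (ltn_ord x0))).
  by rewrite -x0_eq addnn odd_double.
apply/setP => x; rewrite !inE -sq_x0; apply/idP/idP => [/eqP sq_x | ].
  have x_lt := ltn_ord x; have x0_lt := ltn_ord x0.
  case: (sqr_eq_mod sq_x) => [| /dvdnP[m sum_eq]].
    by rewrite !modn_small // => eq_x; apply/orP; left; apply/eqP/val_inj.
  apply/orP; right; apply/eqP/val_inj => /=.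
  by case: m sum_eq => [|[|m]]; rewrite ?mulSn; lia.
by case/orP => /eqP ->; rewrite ?sq_x1.
Qed.

Lemma sum_legendre : \sum_(0 <= a < p) legendre a p = 0.
Proof.
have p_gt0 := prime_gt0 p_pr.
(* every x is a square root of exactly one residue class *)
pose sqr (x : 'I_p) : 'I_p := Ordinal (ltn_pmod (x * x) p_gt0).
have sum_card : (\sum_(a < p) #|[set x : 'I_p | (x * x == a %[mod p])%N]| = p)%N.
  transitivity (\sum_(x : 'I_p) 1)%N; last by rewrite sum1_card card_ord.
  rewrite [RHS](partition_big sqr xpredT) //=; apply: eq_bigr => a _.
  rewrite sum1dep_card; apply: eq_card => x.
  by rewrite !inE -val_eqE /= [(a %% p)%N]modn_small.
have : \sum_(a < p) (1 + legendre a p) = p%:Z.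
  rewrite -[in RHS]sum_card -natz natr_sum; apply: eq_bigr => a _.
  by rewrite natz card_sqrt_mod.
rewrite big_mkord big_split sumr_const card_ord /= natz.
by rewrite -[X in _ = X]addr0 => /addrI.
Qed.

End QuadraticResidues.

Definition ndvd_pairs_closed (p n : nat) : int :=
  let q := (n %/ p)%N in
  let r := (n - q * p)%N in
  let psi : int := Num.max 0 (2 * r%:Z - p%:Z + 1) in
  n%:Z ^+ 2 - n%:Z - 2 * n%:Z * q%:Z + p%:Z * q%:Z ^+ 2 + q%:Z - psi.

Section NondivisibleSums.
Variable p : nat.
Hypothesis p_odd : odd p.

Let p_gt0 : (0 < p)%N. Proof. exact: odd_gt0. Qed.

Let divn_addl q t : (t < p)%N -> ((q * p + t) %/ p = q)%N.
Proof. by move=> t_lt; rewrite divnMDl // divn_small // addn0. Qed.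

Lemma ndvd_pairs_closed_divn_eq q r : (r < p)%N ->
  ndvd_pairs_closed p (q * p + r) =
    (q * p + r)%:Z ^+ 2 - (q * p + r)%:Z - 2 * (q * p + r)%:Z * q%:Z
    + p%:Z * q%:Z ^+ 2 + q%:Z - Num.max 0 (2 * r%:Z - p%:Z + 1).
Proof. by move=> r_lt; rewrite /ndvd_pairs_closed divn_addl // addKn. Qed.

Lemma ndvd_pairs_closedS n : ndvd_pairs_closed p n.+1 =
  ndvd_pairs_closed p n + 2 * (n%:Z - (((2 * n).+1 %/ p)%:Z - (n.+1 %/ p)%:Z)).
Proof.
rewrite (divn_eq n p); set q := (n %/ p)%N; set r := (n %% p)%N.
have r_lt : (r < p)%N by rewrite ltn_mod.
(* oddness of p is needed when 2r + 2 < p has to follow from 2r + 1 < p *)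
have p_eq : p = (2 * p./2).+1 by rewrite mul2n -[LHS]odd_double_half p_odd.
rewrite ndvd_pairs_closed_divn_eq //.
have [r1_lt | r1_ge] := ltnP r.+1 p.
  rewrite -addnS ndvd_pairs_closed_divn_eq // divn_addl //.
  have -> : ((2 * (q * p + r)).+1 = 2 * q * p + (2 * r).+1)%N by lia.
  have [r2_lt | r2_ge] := ltnP (2 * r).+1 p.
    by rewrite divn_addl // !max_l; lia.
  have -> : (2 * q * p + (2 * r).+1 = (2 * q).+1 * p + ((2 * r).+1 - p))%N by lia.
  rewrite divn_addl; last by lia.
  rewrite !max_r; lia.
have -> : ((q * p + r).+1 = q.+1 * p + 0)%N by lia.
have -> : ((2 * (q * p + r)).+1 = (2 * q).+1 * p + r)%N by lia.
rewrite ndvd_pairs_closed_divn_eq // !divn_addl // max_l ?max_r; try lia.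
have -> : p = r.+1 by lia.
rewrite !(PoszD, PoszM, intS); ring.
Qed.

Lemma sum_dvdn_iota m : \sum_(1 <= s < m.+1) (p %| s)%N%:Z = (m %/ p)%:Z.
Proof.
elim: m => [|m IH]; first by rewrite big_geq ?div0n.
by rewrite big_nat_recr //= IH divnS // PoszD addrC.
Qed.

Lemma window_sum_ndvd n : window_sum (fun s => (~~ (p %| s)%N)%:Z) n =
  n%:Z - (((2 * n).+1 %/ p)%:Z - (n.+1 %/ p)%:Z).
Proof.
rewrite -!sum_dvdn_iota (@big_cat_nat _ _ _ n.+2 1 (2 * n).+2) //=; last by lia.
rewrite addrC addrK /window_sum.
have -> : n%:Z = \sum_(n.+2 <= s < (2 * n).+2) 1.
  by rewrite sumr_const_nat -natz; congr (_%:R); lia.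
by rewrite -sumrB; apply: eq_bigr => s _; case: (p %| s)%N.
Qed.

Lemma pair_sum_ndvd n :
  2 * pair_sum (fun s => (~~ (p %| s)%N)%:Z) n = ndvd_pairs_closed p n.
Proof.
elim: n => [|n IH].
  by rewrite /pair_sum big_geq // /ndvd_pairs_closed div0n max_l //; lia.
by rewrite /pair_sum big_nat_recr //= mulrDr IH window_sum_ndvd ndvd_pairs_closedS.
Qed.

End NondivisibleSums.

Lemma big_inj_iota (R : Type) (idx : R) (op : Monoid.com_law idx)
    (V : finType) (f : V -> nat) n (F : nat -> R) :
  #|V| = n -> injective f -> (forall v, (1 <= f v <= n)%N) ->
  \big[op/idx]_(v : V) F (f v) = \big[op/idx]_(1 <= i < n.+1) F i.
Proof.
move=> card_V f_inj f_range.
rewrite -big_enum -(big_map f xpredT) /index_iota subSS subn0; apply: perm_big.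
have f_uniq : uniq (map f (enum V)) by rewrite map_inj_uniq ?enum_uniq.
have sub : {subset map f (enum V) <= iota 1 n}.
  by move=> _ /mapP[v _ ->]; rewrite mem_iota; have := f_range v; lia.
have size_le : (size (iota 1 n) <= size (map f (enum V)))%N.
  by rewrite size_iota size_map -cardE card_V.
have [_ eq_iota] := uniq_min_size f_uniq sub size_le.
exact: uniq_perm (iota_uniq 1 n) eq_iota.
Qed.

Definition edge_sum (p : nat) (k : int) (s : nat) : bool :=
  ~~ (p %| s)%N && (legendre s p == k).

Lemma edge_sum_legendre p k : (k = 1 \/ k = -1) -> forall s,
  2 * (edge_sum p k s)%:Z = (~~ (p %| s)%N)%:Z + k * legendre s p.
Proof.
move=> k_sign s; rewrite /edge_sum /legendre.
by case: (p %| s)%N k_sign => [_ | [] ->] /=; rewrite ?mulr0 //; case: ifP.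
Qed.

Section LegendreGraph.
Variables (V : finType) (f : V -> nat) (p : nat) (k : int).
Hypothesis f_inj : injective f.

Let ordered_edges :=
  [set ab : V * V | (f ab.1 < f ab.2)%N && edge_sum p k (f ab.1 + f ab.2)].

Lemma card_legendre_edges_ordered : #|legendre_edges f p k| = #|ordered_edges|.
Proof.
have -> : legendre_edges f p k = [set [set ab.1; ab.2] | ab in ordered_edges].
  apply/setP => e; rewrite inE; apply/existsP/imsetP.
    move=> [a /existsP[b /andP[/and3P[neq_ab ndvd leg] /eqP ->]]].
    have : f a != f b by apply: contra neq_ab => /eqP/f_inj ->.
    rewrite neq_ltn => /orP[lt_ab | lt_ba].
      by exists (a, b); rewrite // inE /= lt_ab /edge_sum ndvd leg.
    exists (b, a); last by rewrite /= setUC.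
    by rewrite inE /= lt_ba /edge_sum addnC ndvd leg.
  move=> [[a b]]; rewrite inE /= => /andP[lt_ab /andP[ndvd leg]] ->.
  exists a; apply/existsP; exists b; rewrite eqxx andbT /legendre_adj ndvd leg !andbT.
  by apply: contraTneq lt_ab => ->; rewrite ltnn.
apply: card_in_imset => -[a b] [c d].
rewrite !inE /= => /andP[lt_ab _] /andP[lt_cd _] eq_e.
have : a \in [set c; d] by rewrite -eq_e set21.
have : b \in [set c; d] by rewrite -eq_e set22.
rewrite !inE => /orP[] /eqP eq_b /orP[] /eqP eq_a; subst a b => //;
  by move: lt_ab lt_cd; rewrite ?ltnn //; lia.
Qed.

Lemma card_legendre_edges n : #|V| = n -> (forall v, (1 <= f v <= n)%N) ->
  #|legendre_edges f p k|%:Z = pair_sum (fun s => (edge_sum p k s)%:Z) n.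
Proof.
move=> card_V f_range; rewrite card_legendre_edges_ordered -pair_sum_iota.
pose G x y : nat := (x < y)%N && edge_sum p k (x + y).
rewrite -sum1dep_card big_mkcond -(pair_bigA _ (fun a b => G (f a) (f b))) /=.
rewrite (big_inj_iota _ (fun x => \sum_(b : V) G x (f b))%N card_V f_inj f_range).
under eq_bigr do rewrite (big_inj_iota _ (G _) card_V f_inj f_range).
rewrite -natz natr_sum; apply: eq_bigr => x _; rewrite natr_sum; apply: eq_bigr => y _.
by rewrite /G natz; case: (x < y)%N.
Qed.

End LegendreGraph.

Theorem lemma3p2 (p : nat) (k : int) (n : nat) (V : finType) (f : V -> nat) :
  prime p -> odd p ->
  (k = 1 \/ k = -1) ->
  (1 <= n)%N ->
  #|V| = n ->
  injective f ->
  (forall v : V, (1 <= f v <= n)%N) ->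
  let q := (n %/ p)%N in
  let r := (n - q * p)%N in
  let psi : int := Num.max 0 (2 * r%:Z - p%:Z + 1) in
  let S1 : int := \sum_(2 <= s < r.+2 | s != p)
                    (s%:Z - 1 - delta s) * legendre s p in
  let S2 : int := \sum_(r.+2 <= s < (2 * r).+1 | s != p)
                    (2 * r%:Z - s%:Z + 1 - delta s) * legendre s p in
  (#|legendre_edges f p k|%:Q =
     ((n%:Z ^+ 2 - n%:Z - 2 * n%:Z * q%:Z + p%:Z * q%:Z ^+ 2 + q%:Z - psi
       + k * (S1 + S2))%:~R) / 4).
Proof.
move=> p_pr p_odd k_sign _ card_V f_inj f_range q r psi S1 S2.
have r_mod : r = (n %% p)%N by rewrite /r /q {1}(divn_eq n p) addKn.
have S_pairs : S1 + S2 = 2 * pair_sum (legendre^~ p) n.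
  rewrite /S1 /S2 !sum_legendre_skip_p.
  rewrite (pair_sum_mod p_odd (legendre_periodic p)) ?sum_legendre //.
  by rewrite -r_mod -head_sum_tail_sum.
have edges4 : 4 * #|legendre_edges f p k|%:Z = ndvd_pairs_closed p n + k * (S1 + S2).
  rewrite (card_legendre_edges p k f_inj card_V f_range) S_pairs -pair_sum_ndvd //.
  rewrite (_ : 4 = 2 * 2) // -mulrA -pair_sumMl.
  rewrite (eq_pair_sum _ (edge_sum_legendre p k_sign)).
  by rewrite pair_sumD pair_sumMl mulrDr mulrCA.
rewrite -[X in (X%:~R / 4)]/(ndvd_pairs_closed p n + k * (S1 + S2)) -edges4.
by rewrite intrM mulrC mulKf.
Qed.
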